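(* Let $A$ be an $n\times n$ matrix with a designated set of large positions, and let $(X,Y)$ be a restriction with $m=|X|\ge2$ that is $q$-good for some $q<\frac{1}{m(m-1)}$. Then $(X,Y)$ has a $0$-strong line, i.e. a row $i\in X$ with $(i,j)$ large for all $j\in Y$, or a column $j\in Y$ with $(i,j)$ large for all $i\in X$.
   Context: Let $A=(a_{ij})_{i,j\in[n]}$ with a designated set $L\subseteq[n]\times[n]$ of large positions. A restriction is $(X,Y)$ with $X,Y\subseteq[n]$, $|X|=|Y|$; a generalized diagonal of $A[X,Y]$ is $\{(i,\sigma(i)):i\in X\}$ for a bijection $\sigma:X\to Y$, random meaning uniform $\sigma$; it is good if it contains exactly one large position; $(X,Y)$ is $q$-good if a random generalized diagonal is good with probability $\ge1-q$. *)

From HB Require Import structures.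
From mathcomp Require Import all_boot all_order all_algebra.
Set Implicit Arguments. Unset Strict Implicit. Unset Printing Implicit Defensive.
Import Order.TTheory GRing.Theory Num.Theory.
Local Open Scope ring_scope.

(* Rows/columns are indexed by 'I_n; the large positions form L : {set 'I_n * 'I_n}.
   A restriction (X, Y) has X Y : {set 'I_n} with #|X| = #|Y|. *)

Definition elX n (X : {set 'I_n}) := {i : 'I_n | i \in X}.

(* Bijections sigma : X -> Y, as finite functions on X with values in 'I_n
   that land in Y and are injective (hence bijective when #|X| = #|Y|). *)
Definition bijections n (X Y : {set 'I_n}) : {set {ffun elX X -> 'I_n}} :=
  [set f : {ffun elX X -> 'I_n} | [forall x, f x \in Y] && injectiveb f].

Definition good_diag n (L : {set 'I_n * 'I_n}) (X : {set 'I_n})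
    (f : {ffun elX X -> 'I_n}) : bool :=
  #|[set x : elX X | (val x, f x) \in L]| == 1%N.

Definition prob_good (R : realFieldType) n (L : {set 'I_n * 'I_n})
    (X Y : {set 'I_n}) : R :=
  (#|[set f in bijections X Y | good_diag L f]|)%:R / (#|bijections X Y|)%:R.

Definition q_good (R : realFieldType) n (L : {set 'I_n * 'I_n})
    (X Y : {set 'I_n}) (q : R) : Prop :=
  (1 - q <= prob_good R L X Y)%R.

Definition has_0strong_line n (L : {set 'I_n * 'I_n}) (X Y : {set 'I_n}) : Prop :=
  (exists2 i, i \in X & forall j, j \in Y -> (i, j) \in L) \/
  (exists2 j, j \in Y & forall i, i \in X -> (i, j) \in L).

From HB Require Import structures.
From mathcomp Require Import all_boot all_order all_algebra all_fingroup.
From mathcomp Require Import lra.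
Set Implicit Arguments. Unset Strict Implicit. Unset Printing Implicit Defensive.
Import Order.TTheory GRing.Theory Num.Theory.
Local Open Scope ring_scope.

(* Let m = #|X| = #|Y| >= 2 and suppose (X, Y) has no
   0-strong line, i.e. every row of X and every column of Y contains a
   non-large position of X x Y.
   1. (Blocking pair) There are a != c in X and b != d in Y such that no
      bijection sigma with sigma a = b and sigma c = d gives a good diagonal:
      either there are two large positions in distinct rows and columns (take
      them), or all large positions lie on the cross of one large (i, j)
      (send i and some a to holes of row i and column j), or there are no
      large positions at all.
   2. (Fibre count) The bijections with sigma a = b, sigma c = d form at least
      a 1/(m(m-1)) fraction of all bijections: composing sigma with two
      transpositions of 'I_n lands in that fibre, and sigma is recovered from
      the result together with the pair (sigma a, sigma c).
   3. Hence the probability of a good diagonal is at most 1 - 1/(m(m-1)),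
      which contradicts q-goodness with q < 1/(m(m-1)). *)

Lemma bijectionsP n (X Y : {set 'I_n}) (f : {ffun elX X -> 'I_n}) :
  reflect ((forall x, f x \in Y) /\ injective f) (f \in bijections X Y).
Proof.
rewrite inE; apply: (iffP andP) => [[/forallP fY /injectiveP finj] | [fY finj]].
  by split.
by split; [apply/forallP | apply/injectiveP].
Qed.

Lemma not_good_of_none n (L : {set 'I_n * 'I_n}) X (f : {ffun elX X -> 'I_n}) :
  (forall x, (val x, f x) \notin L) -> ~~ good_diag L f.
Proof.
move=> noL; rewrite /good_diag.
suff -> : [set x : elX X | (val x, f x) \in L] = set0 by rewrite cards0.
by apply/setP => x; rewrite !inE (negbTE (noL x)).
Qed.

Lemma not_good_of_two n (L : {set 'I_n * 'I_n}) X (f : {ffun elX X -> 'I_n})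
    (x y : elX X) :
  x != y -> (val x, f x) \in L -> (val y, f y) \in L -> ~~ good_diag L f.
Proof.
move=> xy xL yL; rewrite /good_diag neq_ltn; apply/orP; right.
apply/card_gt1P; exists x, y; by rewrite !inE xL yL.
Qed.

Section Fibre.
Variables (n : nat) (X Y : {set 'I_n}) (a c : elX X) (b d : 'I_n).

Definition fibre : {set {ffun elX X -> 'I_n}} :=
  [set f in bijections X Y | (f a == b) && (f c == d)].

Hypotheses (ac : a != c) (bd : b != d) (bY : b \in Y) (dY : d \in Y).

Definition realign_perm (f : {ffun elX X -> 'I_n}) (y : 'I_n) : 'I_n :=
  tperm (tperm (f a) b (f c)) d (tperm (f a) b y).

Definition realign (f : {ffun elX X -> 'I_n}) : {ffun elX X -> 'I_n} :=
  [ffun x => realign_perm f (f x)].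

Lemma realign_perm_inj f : injective (realign_perm f).
Proof.
by move=> y z; rewrite /realign_perm => /(can_inj (tpermK _ _)) /(can_inj (tpermK _ _)).
Qed.

Lemma tperm_in (u v y : 'I_n) : u \in Y -> v \in Y -> y \in Y ->
  tperm u v y \in Y.
Proof. by move=> uY vY yY; case: tpermP. Qed.

Lemma realign_fibre f : f \in bijections X Y -> realign f \in fibre.
Proof.
case/bijectionsP => fY finj.
have fac : f a != f c by rewrite (inj_eq finj).
(* f c is first moved to c' != b, so the second swap leaves b in place *)
have c'b : tperm (f a) b (f c) != b.
  by rewrite -{2}(tpermL (f a) b) (inj_eq (can_inj (tpermK _ _))) eq_sym.
rewrite inE; apply/and3P; split.
- apply/bijectionsP; split => [x | x y]; rewrite !ffunE.
    by rewrite /realign_perm; do ![apply: tperm_in].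
  by move=> /realign_perm_inj /finj.
- by rewrite ffunE /realign_perm tpermL tpermD // eq_sym.
- by rewrite ffunE /realign_perm tpermL.
Qed.

Definition off_diag : {set 'I_n * 'I_n} := setX Y Y :\: [set (y, y) | y in Y].

Lemma card_off_diag : #|off_diag| = (#|Y| * #|Y|.-1)%N.
Proof.
rewrite cardsD cardsX (setIidPr _) ?card_imset -?subn1 ?mulnBr ?muln1 //.
  by move=> y z [].
by apply/subsetP => _ /imsetP[y yY ->]; rewrite inE /= yY.
Qed.

(* f |-> (realign f, (f a, f c)) injects the bijections into
   fibre x off_diag. *)
Lemma card_bijections_le_fibre :
  (#|bijections X Y| <= #|fibre| * (#|Y| * #|Y|.-1))%N.
Proof.
pose code f := (realign f, (f a, f c)).
have code_inj : injective code.
  move=> f g [efg ea ec].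
  have same_perm : realign_perm f =1 realign_perm g.
    by move=> y; rewrite /realign_perm ea ec.
  apply/ffunP => x.
  have := congr1 (fun h : {ffun elX X -> 'I_n} => h x) efg.
  by rewrite !ffunE same_perm => /realign_perm_inj.
rewrite -card_off_diag -cardsX -(card_imset _ code_inj).
apply/subset_leq_card/subsetP => _ /imsetP[f fB ->].
rewrite inE /= realign_fibre //=.
case/bijectionsP: fB => fY finj.
rewrite !inE !fY /= andbT; apply/imsetP => -[y _ [fay fcy]].
by move: ac; rewrite -(inj_eq finj) fay fcy eqxx.
Qed.

End Fibre.

Lemma strong_line_or_holes n (L : {set 'I_n * 'I_n}) (X Y : {set 'I_n}) :
  has_0strong_line L X Y \/
  ((forall i, i \in X -> exists2 j, j \in Y & (i, j) \notin L) /\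
   (forall j, j \in Y -> exists2 i, i \in X & (i, j) \notin L)).
Proof.
case: (boolP [exists i in X, [forall j in Y, (i, j) \in L]]).
  by case/exists_inP => i iX /forall_inP; left; left; exists i.
case: (boolP [exists j in Y, [forall i in X, (i, j) \in L]]).
  by case/exists_inP => j jY /forall_inP; left; right; exists j.
rewrite !negb_exists_in => /forall_inP colsN /forall_inP rowsN; right; split.
  by move=> i /rowsN /forall_inPn[j]; exists j.
by move=> j /colsN /forall_inPn[i]; exists i.
Qed.

Definition blocking_pair n (L : {set 'I_n * 'I_n}) (X Y : {set 'I_n})
    (a c : elX X) (b d : 'I_n) : Prop :=
  [/\ a != c, b != d, b \in Y, d \in Y &
      forall f, f \in fibre Y a c b d -> ~~ good_diag L f].

Section Blocking.
Variables (n : nat) (L : {set 'I_n * 'I_n}) (X Y : {set 'I_n}).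
Hypothesis rowsN : forall i, i \in X -> exists2 j, j \in Y & (i, j) \notin L.
Hypothesis colsN : forall j, j \in Y -> exists2 i, i \in X & (i, j) \notin L.

Let large_in (p : 'I_n * 'I_n) := [&& p.1 \in X, p.2 \in Y & p \in L].

(* Every large position lies in row i or column j of the large (i, j):
   route i and a hole of column j around the cross. *)
Lemma blocking_of_cross i j (iX : i \in X) (jY : j \in Y) :
  (i, j) \in L ->
  (forall p, large_in p -> (p.1 == i) || (p.2 == j)) ->
  exists (a c : elX X) (b d : 'I_n), blocking_pair L Y a c b d.
Proof.
move=> ijL cross.
have [b bY ibN] := rowsN iX; have [a aX ajN] := colsN jY.
have bj : b != j by apply: contraNneq ibN => ->.
have ai : a != i by apply: contraNneq ajN => ->.
exists (exist _ i iX), (exist _ a aX), b, j; split => //.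
  by apply: contraNneq ai => -[->].
move=> f; rewrite inE => /and3P[/bijectionsP[fY finj] /eqP fi /eqP fa].
apply: not_good_of_none => x; apply/negP => xL.
case: (eqVneq x (exist _ i iX)) => [xi | xi]; first by rewrite xi /= fi (negbTE ibN) in xL.
case: (eqVneq x (exist _ a aX)) => [xa | xa]; first by rewrite xa /= fa (negbTE ajN) in xL.
have /cross : large_in (val x, f x) by rewrite /large_in (valP x) fY xL.
apply/negP; rewrite negb_or /= -fa (inj_eq finj) xa andbT.
by apply: contra xi => /eqP xi; apply/eqP/val_inj.
Qed.

(* Either two large positions in distinct rows and columns, a cross, or no
   large position at all: each case yields a blocking pair. *)
Lemma blocking_pair_exists : (2 <= #|X|)%N -> #|X| = #|Y| ->
  exists (a c : elX X) (b d : 'I_n), blocking_pair L Y a c b d.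
Proof.
move=> X2 XY.
case: (boolP [exists p, large_in p]) => [/existsP[[i j] /and3P[/= iX jY ijL]]|].
  case: (boolP [exists p, [&& large_in p, p.1 != i & p.2 != j]]).
    case/existsP => -[i' j'] /and3P[/and3P[/= i'X j'Y i'j'L] i'i j'j].
    have ii' : exist _ i iX != exist _ i' i'X :> elX X.
      by apply: contraNneq i'i => -[->].
    exists (exist _ i iX), (exist _ i' i'X), j, j'; split; rewrite // 1?eq_sym //.
    move=> f; rewrite inE => /and3P[_ /eqP fi /eqP fi'].
    by apply: (not_good_of_two ii'); rewrite /= ?fi ?fi'.
  rewrite negb_exists => /forallP offcross.
  apply: (blocking_of_cross iX jY ijL) => p lp.
  by move: (offcross p); rewrite lp /= negb_and !negbK.
rewrite negb_exists => /forallP nolarge.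
have [x1 [x2 [x1X x2X x12]]] := card_gt1P X2.
have /card_gt1P[y1 [y2 [y1Y y2Y y12]]] : (1 < #|Y|)%N by rewrite -XY.
exists (exist _ x1 x1X), (exist _ x2 x2X), y1, y2; split => //.
move=> f; rewrite inE => /andP[/bijectionsP[fY _] _].
apply: not_good_of_none => x; move: (nolarge (val x, f x)).
by rewrite /large_in (valP x) fY.
Qed.

End Blocking.

Lemma prob_good_le_avoiding (R : realFieldType) n (L : {set 'I_n * 'I_n})
    (X Y : {set 'I_n}) (S : {set {ffun elX X -> 'I_n}}) (M : nat) :
  (0 < M)%N -> S \subset bijections X Y ->
  (forall f, f \in S -> ~~ good_diag L f) ->
  (#|bijections X Y| <= #|S| * M)%N ->
  prob_good R L X Y <= 1 - M%:R^-1.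
Proof.
move=> M0 SB Sbad NsM; rewrite /prob_good.
have GsN : (#|[set f in bijections X Y | good_diag L f]| + #|S|
              <= #|bijections X Y|)%N.
  rewrite -(subnK (subset_leq_card SB)) leq_add2r -(setIidPr SB) -cardsD.
  apply/subset_leq_card/subsetP => f; rewrite !inE => /andP[fB fgood].
  by rewrite fB andbT; apply: contraTN fgood => /Sbad.
set N := #|bijections X Y| in NsM GsN *; set G := #|_| in GsN *.
have MR : (0 : R) < M%:R by rewrite ltr0n.
have invM1 : M%:R^-1 <= (1 : R) by rewrite invf_le1 // ler1n.
case: (posnP N) => [-> | N0]; first by rewrite invr0 mulr0 subr_ge0.
have NR : (0 : R) < N%:R by rewrite ltr0n.
have NMs : N%:R / M%:R <= #|S|%:R :> R by rewrite ler_pdivrMr // -natrM ler_nat.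
have GsNR : G%:R + #|S|%:R <= N%:R :> R by rewrite -natrD ler_nat.
rewrite ler_pdivrMr // mulrBl mul1r mulrC; lra.
Qed.

Theorem lemma2p14 (R : realFieldType) (T : Type) (n : nat) (A : 'M[T]_n)
    (L : {set 'I_n * 'I_n}) (X Y : {set 'I_n}) (q : R) :
  #|X| = #|Y| ->
  (2 <= #|X|)%N ->
  q < 1 / ((#|X|)%:R * ((#|X|)%:R - 1)) ->
  q_good L X Y q ->
  has_0strong_line L X Y.
Proof.
move=> XY X2 q_small q_good_XY.
have [//|[rowsN colsN]] := strong_line_or_holes L X Y.
have [a [c [b [d [ac bd bY dY fibre_bad]]]]] :=
  blocking_pair_exists rowsN colsN X2 XY.
have fibre_sub : fibre Y a c b d \subset bijections X Y.
  by apply/subsetP => f; rewrite inE => /andP[].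
have card_le := card_bijections_le_fibre ac bd bY dY; rewrite -XY in card_le.
have M0 : (0 < #|X| * #|X|.-1)%N by rewrite muln_gt0 -subn1 subn_gt0 (ltnW X2).
have := prob_good_le_avoiding R M0 fibre_sub fibre_bad card_le.
have -> : (#|X| * #|X|.-1)%N%:R = (#|X|%:R * (#|X|%:R - 1) : R).
  by rewrite natrM -subn1 natrB // ltnW.
move: q_good_XY q_small; rewrite /q_good div1r; lra.
Qed.
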